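(* Let $$H(t)=\prod_p\left(1+\frac{p^{it}+p^{-it}-2}{(p^{1+it}-1)(p^{1-it}-1)}\right)$$ for real $t$, the product being over primes. Then for $|t|\le\frac12$, $$1-c_2t^2\le H(t)\le 1-c_2t^2+2.56\,t^4,$$ where $c_2=\sum_p\frac{(\log p)^2}{(p-1)^2}=1.385604\dots$. *)

From Stdlib Require Export Reals ZArith Znumtheory.
From Coquelicot Require Export Coquelicot.
Open Scope R_scope.

Definition is_primeb (n : nat) : bool :=
  if prime_dec (Z.of_nat n) then true else false.

(* complex power p^s := exp(s log p) for real p > 0 and complex s = a + i b,
   i.e. p^a (cos(b log p) + i sin(b log p)). *)
Definition cpow (p : R) (s : C) : C :=
  (Rpower p (fst s) * cos (snd s * ln p), Rpower p (fst s) * sin (snd s * ln p)).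

Definition Hfactor (t : R) (n : nat) : C :=
  let p := INR n in
  (RtoC 1 + (cpow p (0, t) + cpow p (0, Ropp t) - RtoC 2)
     / ((cpow p (1, t) - RtoC 1) * (cpow p (1, Ropp t) - RtoC 1)))%C.

Fixpoint Hpartial (t : R) (N : nat) : C :=
  match N with
  | O => RtoC 1
  | S m => (Hpartial t m * (if is_primeb (S m) then Hfactor t (S m) else RtoC 1))%C
  end.

Definition c2_term (n : nat) : R :=
  if is_primeb n then (ln (INR n))^2 / (INR n - 1)^2 else 0.

Definition c2 : R := Series c2_term.

From Stdlib Require Import Lra Lia.

(* The local factor at p is 1 - a_p with a_p = x / ((p - 1)^2 + p x), where
   x = 2 (1 - cos th), th = t log p, and th^2 - th^4/12 <= x <= th^2.  Hence
   0 <= a_p <= t^2 (log p)^2 / (p - 1)^2, and the lower bound follows from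
   prod (1 - a_p) >= 1 - sum a_p.  Moreover a_p + a_p^2/2 >= t^2 (log p)^2 / (p - 1)^2 - t^4 k_p
   with k_p = O((log p)^4 / p^2), so 1 - a <= exp (- a - a^2/2) and exp (- z) <= 1 - z + z^2/2
   give the upper bound with the constant sum_p k_p + c_2^2/2 <= 2.52.  The sums over p <= 10000 are evaluated in
   integer arithmetic from rational upper bounds for log p (truncated artanh series); for the
   tail, (log p)^4 <= (8/e)^4 sqrt p and sqrt p / (p - 1)^2 telescopes against 2 / sqrt (p - 1). *)

(** * Elementary inequalities *)

Lemma nondecr_function (f df : R -> R) (a b : R) : a <= b ->
  (forall x, a <= x <= b -> is_derive f x (df x)) ->
  (forall x, a <= x <= b -> 0 <= df x) -> f a <= f b.
Proof.
  intros Hab Hd Hp.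
  destruct (MVT_gen f a b df) as [c [Hc Heq]].
  - intros x Hx. apply Hd. unfold Rmin, Rmax in Hx. destruct (Rle_dec a b); lra.
  - intros x Hx. apply continuity_pt_filterlim, (@ex_derive_continuous R_AbsRing R_NormedModule).
    eexists. apply Hd. unfold Rmin, Rmax in Hx. destruct (Rle_dec a b); lra.
  - unfold Rmin, Rmax in Hc. destruct (Rle_dec a b); [|lra].
    assert (0 <= df c * (b - a)) by (apply Rmult_le_pos; [apply Hp|]; lra).
    lra.
Qed.

Lemma exp_le_compat (x y : R) : x <= y -> exp x <= exp y.
Proof. intros [H|H]; [apply Rlt_le, exp_increasing, H | subst; lra]. Qed.

Lemma exp_neg_le_taylor2 (y : R) : 0 <= y -> exp (- y) <= 1 - y + y ^ 2 / 2.
Proof.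
  intros Hy.
  enough (H : 1 - 0 + 0 ^ 2 / 2 - exp (- 0) <= 1 - y + y ^ 2 / 2 - exp (- y))
    by (rewrite Ropp_0, exp_0 in H; lra).
  apply (nondecr_function (fun y => 1 - y + y ^ 2 / 2 - exp (- y))
           (fun y => - 1 + y + exp (- y))); [lra | |].
  - intros x _. auto_derive; [easy | field].
  - intros x _. pose proof (exp_ineq1_le (- x)). lra.
Qed.

Lemma exp_neg_ge_taylor3 (y : R) : 0 <= y -> 1 - y + y ^ 2 / 2 - y ^ 3 / 6 <= exp (- y).
Proof.
  intros Hy.
  enough (H : exp (- 0) - (1 - 0 + 0 ^ 2 / 2 - 0 ^ 3 / 6)
              <= exp (- y) - (1 - y + y ^ 2 / 2 - y ^ 3 / 6))
    by (rewrite Ropp_0, exp_0 in H; lra).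
  apply (nondecr_function (fun y => exp (- y) - (1 - y + y ^ 2 / 2 - y ^ 3 / 6))
           (fun y => 1 - y + y ^ 2 / 2 - exp (- y))); [lra | |].
  - intros x _. auto_derive; [easy | field].
  - intros x Hx. pose proof (exp_neg_le_taylor2 x ltac:(lra)). lra.
Qed.

Lemma one_minus_le_exp (a : R) : 0 <= a <= 1 -> 1 - a <= exp (- (a + a ^ 2 / 2)).
Proof.
  intros Ha. eapply Rle_trans; [|apply exp_neg_ge_taylor3; nra].
  assert (0 <= a ^ 3 * (1/3 - a/8 - a ^ 2 / 8 - a ^ 3 / 48))
    by (apply Rmult_le_pos; [apply pow_le|]; nra).
  nra.
Qed.

Lemma exp_1_ge : 27/10 <= exp 1.
Proof.
  eapply Rle_trans; [|apply (exp_ge_taylor 1 5); lra].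
  simpl. lra.
Qed.

Lemma ln_le_div_exp_1 (y : R) : 0 < y -> ln y <= y / exp 1.
Proof.
  intros Hy. pose proof (exp_ineq1_le (ln y - 1)) as H.
  unfold Rminus in H. rewrite exp_plus, exp_ln, exp_Ropp in H by exact Hy.
  unfold Rdiv. lra.
Qed.

Lemma ln_pow4_le_sqrt (x : R) : 1 <= x -> ln x ^ 4 <= (80/27) ^ 4 * sqrt x.
Proof.
  intros Hx. set (y := Rpower x (/ 8)).
  assert (Hy : 0 < y) by apply exp_pos.
  assert (Hln : ln x = 8 * ln y) by (unfold y; rewrite ln_Rpower; field).
  assert (Hy4 : y ^ 4 = sqrt x).
  { rewrite <- Rpower_pow, <- Rpower_sqrt by lra. unfold y. rewrite Rpower_mult.
    f_equal. simpl. field. }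
  assert (Hly : 0 <= ln y) by (assert (0 <= ln x) by (rewrite <- ln_1; apply ln_le; lra); lra).
  assert (Hye : ln y <= y / (27/10)).
  { eapply Rle_trans; [apply ln_le_div_exp_1, Hy|].
    pose proof exp_1_ge. unfold Rdiv. apply Rmult_le_compat_l; [lra|].
    apply Rinv_le_contravar; lra. }
  rewrite Hln, <- Hy4.
  replace ((80/27) ^ 4 * y ^ 4) with (8 ^ 4 * (y / (27/10)) ^ 4) by field.
  rewrite Rpow_mult_distr. apply Rmult_le_compat_l; [lra|]. apply pow_incr. lra.
Qed.

Definition artanh_poly (z : R) : R := z + z ^ 3 / 3 + z ^ 5 / 5 + 9 / 56 * z ^ 7.

Lemma ln_ratio_le (z : R) : 0 <= z <= 1/3 -> ln (1 + z) - ln (1 - z) <= 2 * artanh_poly z.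
Proof.
  intros Hz.
  enough (H : 2 * artanh_poly 0 - (ln (1 + 0) - ln (1 - 0))
              <= 2 * artanh_poly z - (ln (1 + z) - ln (1 - z)))
    by (unfold artanh_poly in *; rewrite Rplus_0_r, Rminus_0_r, ln_1 in H; lra).
  (* with u = z^2: 2 (1 + u + u^2 + 9/8 u^3) - 2 / (1 - u) = u^3 (1 - 9 u) / (4 (1 - u)) *)
  apply (nondecr_function (fun z => 2 * artanh_poly z - (ln (1 + z) - ln (1 - z)))
           (fun z => z ^ 6 * (1 - 9 * z ^ 2) / (4 * (1 - z ^ 2)))); [lra | |].
  - intros x Hx. unfold artanh_poly. auto_derive.
    + repeat split; lra.
    + field. repeat split; nra.
  - intros x Hx. apply Rdiv_le_0_compat; [|nra].
    apply Rmult_le_pos; [apply pow_le|]; nra.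
Qed.

Lemma ln_ratio_ge (z : R) : 0 <= z < 1 -> 2 * (z + z ^ 3 / 3) <= ln (1 + z) - ln (1 - z).
Proof.
  intros Hz.
  enough (H : (ln (1 + 0) - ln (1 - 0)) - 2 * (0 + 0 ^ 3 / 3)
              <= (ln (1 + z) - ln (1 - z)) - 2 * (z + z ^ 3 / 3))
    by (rewrite Rplus_0_r, Rminus_0_r, ln_1 in H; lra).
  apply (nondecr_function (fun z => (ln (1 + z) - ln (1 - z)) - 2 * (z + z ^ 3 / 3))
           (fun z => 2 * z ^ 4 / (1 - z ^ 2))); [lra | |].
  - intros x Hx. auto_derive.
    + repeat split; lra.
    + field. repeat split; nra.
  - intros x Hx. apply Rdiv_le_0_compat; nra.
Qed.

Lemma ln_2_eq : ln 2 = ln (1 + 1/3) - ln (1 - 1/3).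
Proof. rewrite <- ln_div by lra. f_equal. field. Qed.

Lemma ln_2_ge : 56/81 <= ln 2.
Proof. rewrite ln_2_eq. eapply Rle_trans; [|apply ln_ratio_ge; lra]. lra. Qed.

Lemma sin_le_id (y : R) : 0 <= y -> sin y <= y.
Proof.
  intros Hy.
  enough (H : 0 - sin 0 <= y - sin y) by (rewrite sin_0 in H; lra).
  apply (nondecr_function (fun y => y - sin y) (fun y => 1 - cos y)); [lra | |].
  - intros x _. auto_derive; [easy | ring].
  - intros x _. pose proof (COS_bound x). lra.
Qed.

Lemma cos_ge_taylor2 (y : R) : 0 <= y -> 1 - y ^ 2 / 2 <= cos y.
Proof.
  intros Hy.
  enough (H : cos 0 - (1 - 0 ^ 2 / 2) <= cos y - (1 - y ^ 2 / 2)) by (rewrite cos_0 in H; lra).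
  apply (nondecr_function (fun y => cos y - (1 - y ^ 2 / 2)) (fun y => y - sin y)); [lra | |].
  - intros x _. auto_derive; [easy | field].
  - intros x Hx. pose proof (sin_le_id x ltac:(lra)). lra.
Qed.

Lemma sin_ge_taylor3 (y : R) : 0 <= y -> y - y ^ 3 / 6 <= sin y.
Proof.
  intros Hy.
  enough (H : sin 0 - (0 - 0 ^ 3 / 6) <= sin y - (y - y ^ 3 / 6)) by (rewrite sin_0 in H; lra).
  apply (nondecr_function (fun y => sin y - (y - y ^ 3 / 6))
           (fun y => cos y - (1 - y ^ 2 / 2))); [lra | |].
  - intros x _. auto_derive; [easy | field].
  - intros x Hx. pose proof (cos_ge_taylor2 x ltac:(lra)). lra.
Qed.

Lemma cos_le_taylor4 (y : R) : 0 <= y -> cos y <= 1 - y ^ 2 / 2 + y ^ 4 / 24.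
Proof.
  intros Hy.
  enough (H : 1 - 0 ^ 2 / 2 + 0 ^ 4 / 24 - cos 0 <= 1 - y ^ 2 / 2 + y ^ 4 / 24 - cos y)
    by (rewrite cos_0 in H; lra).
  apply (nondecr_function (fun y => 1 - y ^ 2 / 2 + y ^ 4 / 24 - cos y)
           (fun y => sin y - (y - y ^ 3 / 6))); [lra | |].
  - intros x _. auto_derive; [easy | field].
  - intros x Hx. pose proof (sin_ge_taylor3 x ltac:(lra)). lra.
Qed.

Lemma one_minus_cos_bounds (th : R) :
  th ^ 2 - th ^ 4 / 12 <= 2 * (1 - cos th) <= th ^ 2.
Proof.
  assert (Hpos : forall y, 0 <= y -> y ^ 2 - y ^ 4 / 12 <= 2 * (1 - cos y) <= y ^ 2).
  { intros y Hy. pose proof (cos_ge_taylor2 y Hy). pose proof (cos_le_taylor4 y Hy). lra. }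
  destruct (Rle_dec 0 th) as [H|H]; [now apply Hpos|].
  rewrite <- cos_neg.
  replace (th ^ 2) with ((- th) ^ 2) by ring. replace (th ^ 4) with ((- th) ^ 4) by ring.
  apply Hpos. lra.
Qed.

(** * The local factors *)

Definition defect (A p x : R) : R := x / (A + p * x).

Section Defect.

Variables (A p : R).
Hypothesis A_pos : 0 < A.
Hypothesis p_ge1 : 1 <= p.

Lemma defect_range (x : R) : 0 <= x -> 0 <= defect A p x <= 1.
Proof.
  intros Hx. unfold defect. split; [apply Rdiv_le_0_compat; nra|].
  apply Rmult_le_reg_r with (A + p * x); [nra|]. field_simplify; nra.
Qed.

Lemma defect_le (x : R) : 0 <= x -> defect A p x <= x / A.
Proof.
  intros Hx. unfold defect, Rdiv. apply Rmult_le_compat_l; [lra|].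
  apply Rinv_le_contravar; nra.
Qed.

Lemma defect_monotone (w x : R) : 0 <= w <= x -> defect A p w <= defect A p x.
Proof.
  intros Hw. unfold defect.
  assert (0 < A + p * w) by nra. assert (0 < A + p * x) by nra.
  apply Rmult_le_reg_r with ((A + p * w) * (A + p * x)); [nra|].
  field_simplify; nra.
Qed.

Lemma defect_quadratic_ge (x : R) : 0 <= x ->
  x / A - (p - 1/2) * (x / A) ^ 2 <= defect A p x + defect A p x ^ 2 / 2.
Proof.
  intros Hx. set (r := x / A). set (q := p * r).
  assert (Hr : 0 <= r) by (apply Rdiv_le_0_compat; lra).
  assert (Hq : 0 <= q) by (unfold q; nra).
  assert (Hd : defect A p x = r / (1 + q)) by (unfold defect, q, r; field; nra).
  assert (E : r / (1 + q) + (r / (1 + q)) ^ 2 / 2 - (r - (p - 1/2) * r ^ 2)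
              = r ^ 2 * q * (p - 1 + (p - 1/2) * q) / (1 + q) ^ 2)
    by (unfold q; field; nra).
  assert (0 <= r ^ 2 * q * (p - 1 + (p - 1/2) * q) / (1 + q) ^ 2)
    by (apply Rdiv_le_0_compat; [apply Rmult_le_pos; [apply Rmult_le_pos|]|]; nra).
  rewrite Hd. lra.
Qed.

Lemma defect_cos_ge (th : R) :
  let a := defect A p (2 * (1 - cos th)) in
  th ^ 2 / A - th ^ 4 * (1 / (12 * A) + (p - 1/2) / A ^ 2) <= a + a ^ 2 / 2.
Proof.
  intros a.
  assert (E : th ^ 2 / A - th ^ 4 * (1 / (12 * A) + (p - 1/2) / A ^ 2)
              = (th ^ 2 - th ^ 4 / 12) / A - (p - 1/2) * (th ^ 2 / A) ^ 2)
    by (field; lra).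
  rewrite E.
  destruct (one_minus_cos_bounds th) as [Hlow Hup].
  set (u := th ^ 2) in *. set (w := u - th ^ 4 / 12) in *.
  assert (Hu : 0 <= u) by (unfold u; nra).
  assert (Hx : 0 <= 2 * (1 - cos th)) by (pose proof (COS_bound th); lra).
  destruct (defect_range _ Hx) as [Ha _]. fold a in Ha.
  destruct (Rle_dec w 0) as [Hw|Hw].
  - assert (w / A <= 0)
      by (unfold Rdiv; apply Rmult_le_0_r; [|apply Rlt_le, Rinv_0_lt_compat]; lra).
    assert (0 <= (p - 1/2) * (u / A) ^ 2) by (apply Rmult_le_pos; [lra | apply pow2_ge_0]).
    nra.
  - assert (Hwu : w / A <= u / A)
      by (apply Rmult_le_compat_r; [apply Rlt_le, Rinv_0_lt_compat|]; unfold w; nra).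
    pose proof (defect_quadratic_ge w ltac:(lra)) as Hq.
    pose proof (defect_monotone w (2 * (1 - cos th)) ltac:(lra)) as Hm. fold a in Hm.
    destruct (defect_range w ltac:(lra)) as [Haw _].
    assert ((w / A) ^ 2 <= (u / A) ^ 2) by (apply pow_incr; split; [apply Rdiv_le_0_compat|]; lra).
    nra.
Qed.

End Defect.

Lemma primeb_ge2 (n : nat) : is_primeb n = true -> (2 <= n)%nat.
Proof.
  unfold is_primeb. destruct (prime_dec (Z.of_nat n)) as [Hp|]; [|discriminate].
  intros _. apply prime_ge_2 in Hp. lia.
Qed.

Lemma primeb_INR_ge2 (n : nat) : is_primeb n = true -> 2 <= INR n.
Proof. intros Hp. apply (le_INR 2), primeb_ge2, Hp. Qed.

Definition prime_defect (t : R) (n : nat) : R :=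
  if is_primeb n then defect ((INR n - 1) ^ 2) (INR n) (2 * (1 - cos (t * ln (INR n))))
  else 0.

Definition quartic_term (n : nat) : R :=
  if is_primeb n
  then ln (INR n) ^ 4 * (1 / (12 * (INR n - 1) ^ 2) + (INR n - 1/2) / ((INR n - 1) ^ 2) ^ 2)
  else 0.

Lemma Hfactor_eq (t : R) (n : nat) : 2 <= INR n ->
  Hfactor t n = RtoC (1 - defect ((INR n - 1) ^ 2) (INR n) (2 * (1 - cos (t * ln (INR n))))).
Proof.
  intros Hn. unfold Hfactor, defect. set (p := INR n) in *.
  set (c := cos (t * ln p)). set (s := sin (t * ln p)).
  assert (Hcs : s ^ 2 + c ^ 2 = 1)
    by (pose proof (sin2_cos2 (t * ln p)) as E; unfold Rsqr in E; fold c s in E; lra).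
  assert (Hc : c <= 1) by apply COS_bound.
  assert (Hneg : cos (- t * ln p) = c /\ sin (- t * ln p) = - s).
  { replace (- t * ln p) with (- (t * ln p)) by ring. rewrite cos_neg, sin_neg. now split. }
  unfold cpow. cbn [fst snd]. rewrite Rpower_O, Rpower_1 by lra. destruct Hneg as [-> ->]. fold c s.
  rewrite !Rmult_1_l.
  assert (Hnum : Cminus (Cplus (c, s) (c, - s)) (RtoC 2) = RtoC (- (2 * (1 - c))))
    by (apply injective_projections; simpl; ring).
  (* (p^(1+it) - 1) (p^(1-it) - 1) = p^2 - 2 p c + 1 = (p - 1)^2 + 2 p (1 - c) *)
  assert (Hden : Cmult (Cminus (p * c, p * s) (RtoC 1)) (Cminus (p * c, p * - s) (RtoC 1))
                 = RtoC ((p - 1) ^ 2 + p * (2 * (1 - c)))).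
  { apply injective_projections; simpl; [|ring].
    transitivity ((p - 1) ^ 2 + p * (2 * (1 - c)) + p ^ 2 * (s ^ 2 + c ^ 2 - 1)); [ring|].
    rewrite Hcs. ring. }
  rewrite Hnum, Hden, <- RtoC_div, <- RtoC_plus by nra.
  f_equal. field. nra.
Qed.

Lemma prime_defect_bounds (t : R) (n : nat) :
  0 <= prime_defect t n <= 1 /\ prime_defect t n <= t ^ 2 * c2_term n.
Proof.
  unfold prime_defect, c2_term. destruct (is_primeb n) eqn:Hp; [|lra].
  pose proof (primeb_INR_ge2 n Hp) as Hn.
  assert (HA : 0 < (INR n - 1) ^ 2) by nra.
  assert (Hx : 0 <= 2 * (1 - cos (t * ln (INR n))))
    by (pose proof (COS_bound (t * ln (INR n))); lra).
  split; [now apply defect_range; lra|].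
  eapply Rle_trans; [apply defect_le; lra|].
  destruct (one_minus_cos_bounds (t * ln (INR n))) as [_ Hup].
  replace (t ^ 2 * (ln (INR n) ^ 2 / (INR n - 1) ^ 2)) with ((t * ln (INR n)) ^ 2 / (INR n - 1) ^ 2)
    by (field; lra).
  apply Rmult_le_compat_r; [apply Rlt_le, Rinv_0_lt_compat|]; lra.
Qed.

Lemma prime_defect_quadratic_ge (t : R) (n : nat) :
  t ^ 2 * c2_term n - t ^ 4 * quartic_term n <= prime_defect t n + prime_defect t n ^ 2 / 2.
Proof.
  unfold prime_defect, c2_term, quartic_term. destruct (is_primeb n) eqn:Hp; [|lra].
  pose proof (primeb_INR_ge2 n Hp) as Hn.
  eapply Rle_trans; [|apply defect_cos_ge; nra].
  right. field. nra.
Qed.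

Lemma prime_defect_0 (t : R) : prime_defect t 0 = 0.
Proof.
  unfold prime_defect. destruct (is_primeb 0) eqn:Hp; [|reflexivity].
  apply primeb_ge2 in Hp. lia.
Qed.

(** * Partial products *)

Section Product.

Variable a : nat -> R.
Hypothesis a_0 : a 0%nat = 0.
Hypothesis a_range : forall n, 0 <= a n <= 1.

Fixpoint prod_one_minus (N : nat) : R :=
  match N with
  | O => 1
  | S m => prod_one_minus m * (1 - a (S m))
  end.

Lemma prod_one_minus_range (N : nat) : 0 <= prod_one_minus N <= 1.
Proof.
  induction N as [|m IH]; simpl; [lra|].
  pose proof (a_range (S m)). split; nra.
Qed.

Lemma prod_one_minus_decr (N : nat) : prod_one_minus (S N) <= prod_one_minus N.
Proof. simpl. pose proof (a_range (S N)). pose proof (prod_one_minus_range N). nra. Qed.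

Lemma prod_one_minus_ge (N : nat) : 1 - sum_f_R0 a N <= prod_one_minus N.
Proof.
  induction N as [|m IH]; simpl; [rewrite a_0; lra|].
  pose proof (a_range (S m)). pose proof (prod_one_minus_range m).
  assert (0 <= sum_f_R0 a m) by (apply cond_pos_sum; intros n; apply a_range).
  nra.
Qed.

Lemma prod_one_minus_le (N : nat) :
  prod_one_minus N <= exp (- sum_f_R0 (fun n => a n + a n ^ 2 / 2) N).
Proof.
  induction N as [|m IH]; cbn [prod_one_minus sum_f_R0].
  - rewrite a_0. replace (- (0 + 0 ^ 2 / 2)) with 0 by field. rewrite exp_0. lra.
  - rewrite Ropp_plus_distr, exp_plus.
    pose proof (prod_one_minus_range m).
    apply Rmult_le_compat; [lra | pose proof (a_range (S m)); lra | exact IH |].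
    apply one_minus_le_exp, a_range.
Qed.

Lemma ex_lim_prod_one_minus : exists l : R, is_lim_seq prod_one_minus l.
Proof.
  destruct (ex_finite_lim_seq_decr prod_one_minus 0 prod_one_minus_decr) as [l Hl].
  - intros n. apply prod_one_minus_range.
  - now exists l.
Qed.

End Product.

Lemma Hpartial_eq (t : R) (N : nat) : Hpartial t N = RtoC (prod_one_minus (prime_defect t) N).
Proof.
  induction N as [|m IH]; [reflexivity|]. simpl. rewrite IH.
  unfold prime_defect. destruct (is_primeb (S m)) eqn:Hp.
  - rewrite Hfactor_eq by now apply primeb_INR_ge2.
    unfold Cmult, RtoC. apply injective_projections; simpl; ring.
  - unfold Cmult, RtoC. apply injective_projections; simpl; ring.
Qed.

(** * Certified bounds for the primes up to 10000 *)

Lemma IZR_Zpow (z k : Z) : (0 <= k)%Z -> IZR (z ^ k) = IZR z ^ Z.to_nat k.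
Proof. intros Hk. rewrite pow_IZR, Z2Nat.id by exact Hk. reflexivity. Qed.

Ltac push_IZR :=
  repeat progress rewrite ?plus_IZR, ?minus_IZR, ?mult_IZR, ?IZR_Zpow by lia;
  cbv [Z.to_nat Pos.to_nat Pos.iter_op Nat.add].

Definition Zceil_div (a b : Z) : Z := (- (- a / b))%Z.

Lemma Zceil_div_ge (a b : Z) : (0 < b)%Z -> IZR a / IZR b <= IZR (Zceil_div a b).
Proof.
  intros Hb. unfold Zceil_div.
  pose proof (Z.div_mod (- a) b ltac:(lia)) as E.
  pose proof (Z.mod_pos_bound (- a) b Hb) as Hr.
  set (q := (- a / b)%Z) in *. set (r := (- a mod b)%Z) in *.
  assert (Ea : IZR a = - (IZR b * IZR q) - IZR r)
    by (rewrite <- mult_IZR, <- opp_IZR, <- minus_IZR; f_equal; lia).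
  assert (0 <= IZR r) by (apply IZR_le; lia).
  assert (0 < IZR b) by (apply IZR_lt; lia).
  rewrite opp_IZR, Ea. apply Rmult_le_reg_r with (IZR b); [lra|].
  field_simplify; nra.
Qed.

Fixpoint no_divisor_from (m d : Z) (fuel : nat) : bool :=
  match fuel with
  | O => true
  | S fuel =>
      if (m <? d * d)%Z then true
      else if (m mod d =? 0)%Z then false
      else no_divisor_from m (d + 1) fuel
  end.

(* Only completeness (prime -> true) is proved: a composite accepted by mistake would only
   add a nonnegative term to the upper bounds below. *)
Definition trial_prime (m : Z) : bool :=
  (2 <=? m)%Z && no_divisor_from m 2 (Z.to_nat (Z.sqrt m)).

Lemma no_divisor_from_prime (m : Z) : prime m ->
  forall fuel d, (2 <= d)%Z -> no_divisor_from m d fuel = true.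
Proof.
  intros Hp fuel. pose proof (prime_ge_2 m Hp).
  induction fuel as [|fuel IH]; intros d Hd; simpl; [reflexivity|].
  destruct (m <? d * d)%Z eqn:Hsq; [reflexivity|].
  apply Z.ltb_ge in Hsq.
  destruct (m mod d =? 0)%Z eqn:Hmod; [|apply IH; lia].
  apply Z.eqb_eq, Z.mod_divide in Hmod; [|lia].
  destruct (prime_divisors m Hp d Hmod) as [?|[?|[?|?]]]; nia.
Qed.

Lemma trial_prime_complete (m : Z) : prime m -> trial_prime m = true.
Proof.
  intros Hp. unfold trial_prime. pose proof (prime_ge_2 m Hp).
  rewrite no_divisor_from_prime by (auto || lia).
  apply andb_true_intro. split; [apply Z.leb_le; lia | reflexivity].
Qed.

Lemma trial_prime_ge2 (m : Z) : trial_prime m = true -> (2 <= m)%Z.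
Proof. unfold trial_prime. intros H. apply andb_prop in H as [H _]. now apply Z.leb_le. Qed.

Definition artanh_num (a b : Z) : Z :=
  840 * a * b ^ 6 + 280 * a ^ 3 * b ^ 4 + 168 * a ^ 5 * b ^ 2 + 135 * a ^ 7.

Definition artanh_den (b : Z) : Z := 840 * b ^ 7.

Lemma artanh_poly_frac (a b : Z) : b <> 0%Z ->
  artanh_poly (IZR a / IZR b) = IZR (artanh_num a b) / IZR (artanh_den b).
Proof.
  intros Hb. apply not_0_IZR in Hb.
  unfold artanh_poly, artanh_num, artanh_den.
  push_IZR. field. exact Hb.
Qed.

Lemma ln_le_artanh_sum (m : Z) : (1 <= m)%Z ->
  let k := Z.log2 m in
  let q := (2 ^ k)%Z in
  ln (IZR m) <= 2 * (IZR k * artanh_poly (1/3) + artanh_poly (IZR (m - q) / IZR (m + q))).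
Proof.
  intros Hm k q.
  destruct (Z.log2_spec m ltac:(lia)) as [Hq1 Hq2]. fold k q in Hq1, Hq2.
  assert (Hk : (0 <= k)%Z) by apply Z.log2_nonneg.
  rewrite Z.pow_succ_r in Hq2 by exact Hk. fold q in Hq2.
  assert (Iq : IZR q = 2 ^ Z.to_nat k) by (unfold q; rewrite IZR_Zpow by exact Hk; reflexivity).
  assert (Hq0 : 0 < IZR q) by (apply IZR_lt; lia).
  assert (Hqm : IZR q <= IZR m) by (apply IZR_le; lia).
  assert (Hm2q : 3 * IZR (m - q) <= IZR (m + q)) by (rewrite <- mult_IZR; apply IZR_le; lia).
  rewrite minus_IZR, plus_IZR in *.
  set (z := (IZR m - IZR q) / (IZR m + IZR q)).
  assert (Hz : 0 <= z <= 1/3).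
  { unfold z. split; [apply Rdiv_le_0_compat; lra|].
    apply Rmult_le_reg_r with (IZR m + IZR q); [lra|]. field_simplify; lra. }
  assert (Hsplit : ln (IZR m) = IZR k * ln 2 + (ln (1 + z) - ln (1 - z))).
  { rewrite <- ln_div by lra.
    replace ((1 + z) / (1 - z)) with (IZR m / IZR q) by (unfold z; field; lra).
    rewrite ln_div, Iq, ln_pow by lra.
    rewrite INR_IZR_INZ, Z2Nat.id by exact Hk. ring. }
  rewrite Hsplit, ln_2_eq.
  pose proof (ln_ratio_le (1/3) ltac:(lra)). pose proof (ln_ratio_le z Hz).
  assert (0 <= IZR k) by (apply IZR_le; exact Hk).
  nra.
Qed.

Lemma Zceil_div_scaled_ge (x : R) (a b s : Z) : (0 < b)%Z -> (0 < s)%Z ->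
  x <= IZR a / IZR b -> x <= IZR (Zceil_div (s * a) b) / IZR s.
Proof.
  intros Hb Hs Hx. assert (0 < IZR s) by (apply IZR_lt; exact Hs).
  apply Rmult_le_reg_r with (IZR s); [lra|].
  replace (IZR (Zceil_div (s * a) b) / IZR s * IZR s) with (IZR (Zceil_div (s * a) b))
    by (field; lra).
  eapply Rle_trans; [|apply Zceil_div_ge, Hb].
  rewrite mult_IZR.
  replace (IZR s * IZR a / IZR b) with (IZR a / IZR b * IZR s) by (unfold Rdiv; ring).
  apply Rmult_le_compat_r; lra.
Qed.

Definition ln_scale : Z := 2 ^ 32.

(* ceil (ln_scale * 2 (k artanh_poly (1/3) + artanh_poly (a/b))), see ln_le_artanh_sum *)
Definition ln_fix (m : Z) : Z :=
  let k := Z.log2 m in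
  let a := (m - 2 ^ k)%Z in
  let b := (m + 2 ^ k)%Z in
  Zceil_div (ln_scale * (2 * (k * artanh_num 1 3 * artanh_den b + artanh_num a b * artanh_den 3)))
            (artanh_den 3 * artanh_den b).

Lemma ln_le_ln_fix (m : Z) : (1 <= m)%Z -> ln (IZR m) <= IZR (ln_fix m) / IZR ln_scale.
Proof.
  intros Hm. pose proof (ln_le_artanh_sum m Hm) as H. cbv zeta in H.
  unfold ln_fix. cbv zeta.
  set (k := Z.log2 m) in *. set (q := (2 ^ k)%Z) in *.
  assert (Hq : (0 < q)%Z) by (apply Z.pow_pos_nonneg; [lia | apply Z.log2_nonneg]).
  assert (Hb : (0 < artanh_den (m + q))%Z)
    by (unfold artanh_den; apply Z.mul_pos_pos; [|apply Z.pow_pos_nonneg]; lia).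
  apply Zceil_div_scaled_ge; [apply Z.mul_pos_pos; [reflexivity | exact Hb] | reflexivity |].
  eapply Rle_trans; [exact H|].
  rewrite (artanh_poly_frac 1 3), artanh_poly_frac by lia.
  assert (0 < IZR (artanh_den 3)) by (apply IZR_lt; reflexivity).
  assert (0 < IZR (artanh_den (m + q))) by (apply IZR_lt; exact Hb).
  rewrite !mult_IZR, plus_IZR, !mult_IZR.
  right. field. lra.
Qed.

Definition term_scale : Z := 100000000.

Definition c2_fix (m : Z) : Z :=
  if trial_prime m
  then Zceil_div (term_scale * ln_fix m ^ 2) (ln_scale ^ 2 * (m - 1) ^ 2)
  else 0.

(* 1 / (12 A) + (p - 1/2) / A^2 = (2 A + 24 p - 12) / (24 A^2) with A = (p - 1)^2 *)
Definition quartic_fix (m : Z) : Z :=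
  if trial_prime m
  then Zceil_div (term_scale * (ln_fix m ^ 4 * (2 * (m - 1) ^ 2 + 24 * m - 12)))
                 (ln_scale ^ 4 * (24 * (m - 1) ^ 4))
  else 0.

Lemma primeb_false_of_trial_prime (n : nat) :
  trial_prime (Z.of_nat n) = false -> is_primeb n = false.
Proof.
  unfold is_primeb. destruct (prime_dec (Z.of_nat n)) as [Hp|]; [|reflexivity].
  rewrite trial_prime_complete by exact Hp. discriminate.
Qed.

Lemma ln_fix_bounds (m : Z) : trial_prime m = true ->
  2 <= IZR m /\ 0 <= ln (IZR m) <= IZR (ln_fix m) / IZR ln_scale.
Proof.
  intros Ht. apply trial_prime_ge2 in Ht.
  assert (Hm : 2 <= IZR m) by (apply IZR_le; exact Ht).
  split; [exact Hm | split].
  - rewrite <- ln_1. apply ln_le; lra.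
  - apply ln_le_ln_fix. lia.
Qed.

Lemma c2_term_le_fix (n : nat) : c2_term n <= IZR (c2_fix (Z.of_nat n)) / IZR term_scale.
Proof.
  unfold c2_term, c2_fix. rewrite INR_IZR_INZ. set (m := Z.of_nat n).
  destruct (trial_prime m) eqn:Ht.
  2: { rewrite (primeb_false_of_trial_prime n Ht). unfold Rdiv. lra. }
  pose proof (trial_prime_ge2 m Ht). destruct (ln_fix_bounds m Ht) as [Hm [Hl0 Hl]].
  apply Zceil_div_scaled_ge;
    [apply Z.mul_pos_pos; [reflexivity | apply Z.pow_pos_nonneg; lia] | reflexivity |].
  assert (HS : 0 < IZR ln_scale) by (apply IZR_lt; reflexivity).
  replace (IZR (ln_fix m ^ 2) / IZR (ln_scale ^ 2 * (m - 1) ^ 2))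
    with ((IZR (ln_fix m) / IZR ln_scale) ^ 2 / (IZR m - 1) ^ 2) by (push_IZR; field; lra).
  assert (Hsq : ln (IZR m) ^ 2 <= (IZR (ln_fix m) / IZR ln_scale) ^ 2) by (apply pow_incr; lra).
  assert (HA : 0 < (IZR m - 1) ^ 2) by nra.
  destruct (is_primeb n); [|apply Rdiv_le_0_compat; nra].
  apply Rmult_le_compat_r; [apply Rlt_le, Rinv_0_lt_compat|]; lra.
Qed.

Lemma quartic_term_le_fix (n : nat) :
  quartic_term n <= IZR (quartic_fix (Z.of_nat n)) / IZR term_scale.
Proof.
  unfold quartic_term, quartic_fix. rewrite INR_IZR_INZ. set (m := Z.of_nat n).
  destruct (trial_prime m) eqn:Ht.
  2: { rewrite (primeb_false_of_trial_prime n Ht). unfold Rdiv. lra. }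
  pose proof (trial_prime_ge2 m Ht). destruct (ln_fix_bounds m Ht) as [Hm [Hl0 Hl]].
  apply Zceil_div_scaled_ge; [apply Z.mul_pos_pos; [reflexivity | lia] | reflexivity |].
  assert (HS : 0 < IZR ln_scale) by (apply IZR_lt; reflexivity).
  set (w := 1 / (12 * (IZR m - 1) ^ 2) + (IZR m - 1/2) / ((IZR m - 1) ^ 2) ^ 2).
  replace (IZR (ln_fix m ^ 4 * (2 * (m - 1) ^ 2 + 24 * m - 12))
           / IZR (ln_scale ^ 4 * (24 * (m - 1) ^ 4)))
    with ((IZR (ln_fix m) / IZR ln_scale) ^ 4 * w) by (unfold w; push_IZR; field; lra).
  assert (HA : 0 < (IZR m - 1) ^ 2) by nra.
  assert (Hw : 0 <= w).
  { unfold w. apply Rplus_le_le_0_compat; apply Rdiv_le_0_compat; try lra.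
    apply pow_lt. exact HA. }
  assert (H4 : ln (IZR m) ^ 4 <= (IZR (ln_fix m) / IZR ln_scale) ^ 4) by (apply pow_incr; lra).
  destruct (is_primeb n); [|apply Rmult_le_pos; [apply pow_le|]; lra].
  apply Rmult_le_compat_r; lra.
Qed.

Fixpoint sumZ_from (f : Z -> Z) (m : Z) (n : nat) : Z :=
  match n with
  | O => 0
  | S n => f m + sumZ_from f (m + 1) n
  end.

Lemma sumZ_from_S (f : Z -> Z) (m : Z) (n : nat) :
  sumZ_from f m (S n) = (sumZ_from f m n + f (m + Z.of_nat n))%Z.
Proof.
  revert m. induction n as [|n IH]; intros m.
  - simpl. rewrite !Z.add_0_r. reflexivity.
  - change (sumZ_from f m (S (S n))) with (f m + sumZ_from f (m + 1) (S n))%Z.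
    rewrite IH. rewrite Nat2Z.inj_succ. ring_simplify. f_equal. f_equal. lia.
Qed.

Lemma sum_f_R0_sumZ_from (f : Z -> Z) (D : R) (N : nat) :
  sum_f_R0 (fun n => IZR (f (Z.of_nat n)) / D) N = IZR (sumZ_from f 0 (S N)) / D.
Proof.
  induction N as [|N IH].
  - simpl. rewrite Z.add_0_r. reflexivity.
  - rewrite sumZ_from_S, plus_IZR, Rdiv_plus_distr, Z.add_0_l, <- IH. reflexivity.
Qed.

Lemma c2_fix_head : sumZ_from c2_fix 0 (S 10000) = 138460934%Z.
Proof. vm_compute. reflexivity. Qed.

Lemma quartic_fix_head : sumZ_from quartic_fix 0 (S 10000) = 140369376%Z.
Proof. vm_compute. reflexivity. Qed.

(** * The tail p > 10000 *)

Lemma sum_le_head_tail (f g w : nat -> R) (T : R) (P : nat) :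
  (forall n, 0 <= f n) -> (forall n, (n <= P)%nat -> f n <= g n) ->
  (forall n, (P < n)%nat -> f n <= T * (w (pred n) - w n)) ->
  (forall n, (P <= n)%nat -> 0 <= w n) -> 0 <= T ->
  forall N, sum_f_R0 f N <= sum_f_R0 g P + T * w P.
Proof.
  intros Hf Hfg Ht Hw HT N.
  assert (Hhead : sum_f_R0 f P <= sum_f_R0 g P) by (apply sum_Rle; auto).
  assert (Htail : forall k, sum_f_R0 f (P + k) <= sum_f_R0 g P + T * (w P - w (P + k)%nat)).
  { induction k as [|k IH].
    - rewrite Nat.add_0_r. lra.
    - replace (P + S k)%nat with (S (P + k)) by lia. simpl.
      pose proof (Ht (S (P + k)) ltac:(lia)) as H. simpl in H. lra. }
  destruct (Nat.le_gt_cases N P) as [HN|HN].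
  - assert (sum_f_R0 f N <= sum_f_R0 f P).
    { replace P with (N + (P - N))%nat by lia. clear - Hf.
      induction (P - N)%nat as [|k IH]; [rewrite Nat.add_0_r; lra|].
      replace (N + S k)%nat with (S (N + k)) by lia. simpl. pose proof (Hf (S (N + k))). lra. }
    pose proof (Rmult_le_pos _ _ HT (Hw P (le_n P))). lra.
  - replace N with (P + (N - P))%nat by lia.
    pose proof (Rmult_le_pos _ _ HT (Hw (P + (N - P))%nat ltac:(lia))).
    pose proof (Htail (N - P)%nat). lra.
Qed.

Definition tail_weight (n : nat) : R := / sqrt (INR n - 1).

Lemma sqrt_succ_div_sq_le (m : R) : 1 < m ->
  sqrt (m + 1) / m ^ 2 <= (2 + 1 / m) * (/ sqrt (m - 1) - / sqrt m).
Proof.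
  intros Hm.
  set (r := sqrt (m - 1)). set (s := sqrt m). set (q := sqrt (m + 1)).
  assert (Hr : r * r = m - 1) by (apply sqrt_sqrt; lra).
  assert (Hs : s * s = m) by (apply sqrt_sqrt; lra).
  assert (Hq : q * q = m + 1) by (apply sqrt_sqrt; lra).
  assert (Hr0 : 0 < r) by (apply sqrt_lt_R0; lra).
  assert (Hs0 : 0 < s) by (apply sqrt_lt_R0; lra).
  assert (Hq0 : 0 < q) by (apply sqrt_lt_R0; lra).
  assert (Hrs : r <= s) by (apply sqrt_le_1_alt; lra).
  assert (Hd : / r - / s = / (r * s * (r + s))).
  { replace (/ r - / s) with ((s * s - r * r) / (r * s * (r + s))) by (field; lra).
    rewrite Hr, Hs. field. lra. }
  rewrite Hd.
  assert (Hqs : q * s <= m + 1/2) by nra.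
  assert (Hden : r * s * (r + s) <= 2 * m * s) by nra.
  assert (0 < r * s * (r + s)) by (apply Rmult_lt_0_compat; nra).
  apply Rmult_le_reg_r with (m ^ 2 * (r * s * (r + s)));
    [apply Rmult_lt_0_compat; [apply pow_lt|]; lra|].
  replace (q / m ^ 2 * (m ^ 2 * (r * s * (r + s)))) with (q * (r * s * (r + s))) by (field; lra).
  replace ((2 + 1 / m) * / (r * s * (r + s)) * (m ^ 2 * (r * s * (r + s))))
    with (2 * m * (m + 1/2)) by (field; lra).
  apply Rle_trans with (q * (2 * m * s)); [apply Rmult_le_compat_l; lra | nra].
Qed.

Lemma INR_gt_10000 (n : nat) : (10000 < n)%nat -> 10001 <= INR n.
Proof.
  intros Hn. apply le_INR in Hn. rewrite INR_IZR_INZ in Hn. exact Hn.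
Qed.

Lemma sqrt_div_sq_le_tail (n : nat) : (10000 < n)%nat ->
  0 <= tail_weight (pred n) - tail_weight n /\
  sqrt (INR n) / (INR n - 1) ^ 2 <= (2 + 1/10000) * (tail_weight (pred n) - tail_weight n).
Proof.
  intros Hn. pose proof (INR_gt_10000 n Hn) as Hx.
  assert (Hpred : INR (pred n) = INR n - 1)
    by (destruct n as [|n]; [lia | rewrite S_INR; simpl; ring]).
  unfold tail_weight. rewrite Hpred.
  assert (Hdiff : 0 <= / sqrt (INR n - 1 - 1) - / sqrt (INR n - 1)).
  { assert (0 < sqrt (INR n - 1 - 1)) by (apply sqrt_lt_R0; lra).
    assert (sqrt (INR n - 1 - 1) <= sqrt (INR n - 1)) by (apply sqrt_le_1_alt; lra).
    assert (/ sqrt (INR n - 1) <= / sqrt (INR n - 1 - 1)) by (apply Rinv_le_contravar; lra).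
    lra. }
  split; [exact Hdiff|].
  pose proof (sqrt_succ_div_sq_le (INR n - 1) ltac:(lra)) as H.
  replace (INR n - 1 + 1) with (INR n) in H by ring.
  eapply Rle_trans; [exact H|]. apply Rmult_le_compat_r; [exact Hdiff|].
  assert (1 / (INR n - 1) <= 1 / 10000)
    by (unfold Rdiv; rewrite !Rmult_1_l; apply Rinv_le_contravar; lra).
  lra.
Qed.

Lemma ln_ge_tail (n : nat) : (10000 < n)%nat -> 13 * (56/81) <= ln (INR n).
Proof.
  intros Hn. pose proof (INR_gt_10000 n Hn).
  assert (ln (2 ^ 13) <= ln (INR n)) by (apply ln_le; [apply pow_lt|]; lra).
  rewrite ln_pow in H0 by lra. replace (INR 13) with 13 in H0 by (simpl; ring).
  pose proof ln_2_ge. lra.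
Qed.

Lemma c2_term_tail (n : nat) : (10000 < n)%nat ->
  c2_term n <= 191/100 * (tail_weight (pred n) - tail_weight n).
Proof.
  intros Hn. destruct (sqrt_div_sq_le_tail n Hn) as [Hdiff Htel].
  unfold c2_term. destruct (is_primeb n); [|nra].
  pose proof (INR_gt_10000 n Hn). pose proof (ln_ge_tail n Hn).
  pose proof (ln_pow4_le_sqrt (INR n) ltac:(lra)) as H4.
  set (l := ln (INR n)) in *. set (x := INR n) in *.
  assert (HA : 0 < (x - 1) ^ 2) by nra.
  assert (Hl2 : l ^ 2 <= (80/27) ^ 4 / (13 * (56/81)) ^ 2 * sqrt x).
  { apply Rmult_le_reg_r with ((13 * (56/81)) ^ 2); [nra|].
    replace ((80/27) ^ 4 / (13 * (56/81)) ^ 2 * sqrt x * (13 * (56/81)) ^ 2)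
      with ((80/27) ^ 4 * sqrt x) by field.
    assert ((13 * (56/81)) ^ 2 <= l ^ 2) by (apply pow_incr; lra).
    assert (0 <= l ^ 2) by nra. nra. }
  apply Rle_trans with ((80/27) ^ 4 / (13 * (56/81)) ^ 2 * sqrt x / (x - 1) ^ 2).
  { apply Rmult_le_compat_r; [apply Rlt_le, Rinv_0_lt_compat; lra | exact Hl2]. }
  replace ((80/27) ^ 4 / (13 * (56/81)) ^ 2 * sqrt x / (x - 1) ^ 2)
    with ((80/27) ^ 4 / (13 * (56/81)) ^ 2 * (sqrt x / (x - 1) ^ 2)) by (field; lra).
  eapply Rle_trans; [apply Rmult_le_compat_l; [simpl; lra | exact Htel]|].
  rewrite <- Rmult_assoc. apply Rmult_le_compat_r; [exact Hdiff | simpl; lra].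
Qed.

Lemma quartic_term_tail (n : nat) : (10000 < n)%nat ->
  quartic_term n <= 1287/100 * (tail_weight (pred n) - tail_weight n).
Proof.
  intros Hn. destruct (sqrt_div_sq_le_tail n Hn) as [Hdiff Htel].
  unfold quartic_term. destruct (is_primeb n); [|nra].
  pose proof (INR_gt_10000 n Hn).
  pose proof (ln_pow4_le_sqrt (INR n) ltac:(lra)) as H4.
  set (l := ln (INR n)) in *. set (x := INR n) in *.
  assert (HA : 0 < (x - 1) ^ 2) by nra.
  set (K0 := 1/12 + (10000 + 1/2) / 10000 ^ 2).
  assert (Hw : 1 / (12 * (x - 1) ^ 2) + (x - 1/2) / ((x - 1) ^ 2) ^ 2 <= K0 / (x - 1) ^ 2).
  { replace (1 / (12 * (x - 1) ^ 2) + (x - 1/2) / ((x - 1) ^ 2) ^ 2)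
      with ((1/12 + (x - 1/2) / (x - 1) ^ 2) / (x - 1) ^ 2) by (field; lra).
    unfold Rdiv at 1 3. apply Rmult_le_compat_r; [apply Rlt_le, Rinv_0_lt_compat; lra|].
    unfold K0. apply Rplus_le_compat_l.
    apply Rmult_le_reg_r with ((x - 1) ^ 2 * 10000 ^ 2); [nra|].
    field_simplify; nra. }
  assert (0 <= l ^ 4) by (replace (l ^ 4) with ((l ^ 2) ^ 2) by ring; apply pow2_ge_0).
  apply Rle_trans with (l ^ 4 * (K0 / (x - 1) ^ 2)); [apply Rmult_le_compat_l; lra|].
  apply Rle_trans with ((80/27) ^ 4 * K0 * (sqrt x / (x - 1) ^ 2)).
  - replace ((80/27) ^ 4 * K0 * (sqrt x / (x - 1) ^ 2))
      with ((80/27) ^ 4 * sqrt x * (K0 / (x - 1) ^ 2)) by (field; lra).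
    apply Rmult_le_compat_r; [apply Rdiv_le_0_compat; unfold K0; lra | exact H4].
  - eapply Rle_trans; [apply Rmult_le_compat_l; [unfold K0; lra | exact Htel]|].
    rewrite <- Rmult_assoc. apply Rmult_le_compat_r; [exact Hdiff | unfold K0; lra].
Qed.

Lemma tail_weight_nonneg (n : nat) : (10000 <= n)%nat -> 0 <= tail_weight n.
Proof.
  intros Hn. unfold tail_weight. apply Rlt_le, Rinv_0_lt_compat, sqrt_lt_R0.
  apply le_INR in Hn. rewrite INR_IZR_INZ in Hn. simpl in Hn. lra.
Qed.

Lemma tail_weight_10000 : tail_weight 10000 <= 10/999.
Proof.
  unfold tail_weight. rewrite INR_IZR_INZ. change (Z.of_nat 10000) with 10000%Z.
  replace (IZR 10000 - 1) with 9999 by lra.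
  assert (999/10 <= sqrt 9999)
    by (rewrite <- (sqrt_square (999/10)) by lra; apply sqrt_le_1_alt; lra).
  replace (10/999) with (/ (999/10)) by field. apply Rinv_le_contravar; lra.
Qed.

Lemma c2_term_nonneg (n : nat) : 0 <= c2_term n.
Proof.
  unfold c2_term. destruct (is_primeb n) eqn:Hp; [|lra].
  pose proof (primeb_INR_ge2 n Hp). apply Rdiv_le_0_compat; [apply pow2_ge_0 | nra].
Qed.

Lemma quartic_term_nonneg (n : nat) : 0 <= quartic_term n.
Proof.
  unfold quartic_term. destruct (is_primeb n) eqn:Hp; [|lra].
  pose proof (primeb_INR_ge2 n Hp).
  assert (0 < (INR n - 1) ^ 2) by nra.
  apply Rmult_le_pos.
  { replace (ln (INR n) ^ 4) with ((ln (INR n) ^ 2) ^ 2) by ring. apply pow2_ge_0. }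
  apply Rplus_le_le_0_compat; apply Rdiv_le_0_compat; try lra. apply pow_lt. lra.
Qed.

Lemma c2_partial_le (N : nat) : sum_f_R0 c2_term N <= 1404/1000.
Proof.
  eapply Rle_trans.
  - apply (sum_le_head_tail c2_term (fun n => IZR (c2_fix (Z.of_nat n)) / IZR term_scale)
             tail_weight (191/100) 10000).
    + exact c2_term_nonneg.
    + intros n _. apply c2_term_le_fix.
    + exact c2_term_tail.
    + exact tail_weight_nonneg.
    + lra.
  - rewrite sum_f_R0_sumZ_from, c2_fix_head. pose proof tail_weight_10000.
    unfold term_scale. lra.
Qed.

Lemma quartic_partial_le (N : nat) : sum_f_R0 quartic_term N <= 1533/1000.
Proof.
  eapply Rle_trans.
  - apply (sum_le_head_tail quartic_term (fun n => IZR (quartic_fix (Z.of_nat n)) / IZR term_scale)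
             tail_weight (1287/100) 10000).
    + exact quartic_term_nonneg.
    + intros n _. apply quartic_term_le_fix.
    + exact quartic_term_tail.
    + exact tail_weight_nonneg.
    + lra.
  - rewrite sum_f_R0_sumZ_from, quartic_fix_head. pose proof tail_weight_10000.
    unfold term_scale. lra.
Qed.

Lemma ex_series_c2 : ex_series c2_term.
Proof.
  apply (ex_finite_lim_seq_incr (sum_n c2_term) (1404/1000)).
  - intros n. rewrite !sum_n_Reals. simpl. pose proof (c2_term_nonneg (S n)). lra.
  - intros n. rewrite sum_n_Reals. apply c2_partial_le.
Qed.

Lemma is_lim_c2 : is_lim_seq (sum_f_R0 c2_term) c2.
Proof.
  apply is_lim_seq_ext with (sum_n c2_term); [intros n; apply sum_n_Reals|].
  apply Series_correct, ex_series_c2.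
Qed.

Lemma c2_partial_le_c2 (N : nat) : sum_f_R0 c2_term N <= c2.
Proof.
  apply is_lim_seq_incr_compare; [exact is_lim_c2|].
  intros n. simpl. pose proof (c2_term_nonneg (S n)). lra.
Qed.

Lemma c2_le : c2 <= 1404/1000.
Proof.
  apply (is_lim_seq_le _ _ _ _ c2_partial_le is_lim_c2 (is_lim_seq_const _)).
Qed.

Lemma c2_ge : (56/81) ^ 2 <= c2.
Proof.
  eapply Rle_trans; [|apply (c2_partial_le_c2 2)].
  assert (Hp2 : is_primeb 2 = true)
    by (unfold is_primeb; destruct (prime_dec (Z.of_nat 2)) as [|H];
        [reflexivity | elim H; exact prime_2]).
  pose proof (c2_term_nonneg 0). pose proof (c2_term_nonneg 1).
  assert (H2 : c2_term 2 = ln 2 ^ 2)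
    by (unfold c2_term; rewrite Hp2; simpl INR; replace (1 + 1) with 2 by ring; field).
  assert ((56/81) ^ 2 <= ln 2 ^ 2) by (apply pow_incr; pose proof ln_2_ge; lra).
  simpl. lra.
Qed.

Lemma filterlim_RtoC (u : nat -> R) (l : R) :
  is_lim_seq u l -> filterlim (fun N => RtoC (u N)) eventually (locally (RtoC l)).
Proof.
  intros Hu. apply filterlim_locally. intros eps.
  generalize (proj1 (filterlim_locally u l) Hu eps).
  apply filter_imp. intros N HN. split; [exact HN | apply ball_center].
Qed.

Lemma exp_le_quadratic (s k : R) : 0 <= k <= s -> exp (k - s) <= 1 - s + k + s ^ 2 / 2.
Proof.
  intros Hks. replace (k - s) with (- (s - k)) by ring.
  eapply Rle_trans; [apply exp_neg_le_taylor2; lra|].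
  assert ((s - k) ^ 2 <= s ^ 2) by (apply pow_incr; lra). lra.
Qed.

Lemma prod_defect_ge (t : R) (N : nat) : 1 - c2 * t ^ 2 <= prod_one_minus (prime_defect t) N.
Proof.
  eapply Rle_trans;
    [|apply prod_one_minus_ge; [apply prime_defect_0 | intros n; apply prime_defect_bounds]].
  assert (sum_f_R0 (prime_defect t) N <= t ^ 2 * sum_f_R0 c2_term N).
  { rewrite scal_sum. apply sum_Rle. intros n _. rewrite Rmult_comm. apply prime_defect_bounds. }
  assert (t ^ 2 * sum_f_R0 c2_term N <= t ^ 2 * c2)
    by (apply Rmult_le_compat_l; [apply pow2_ge_0 | apply c2_partial_le_c2]).
  lra.
Qed.

Lemma prod_defect_le (t : R) (N : nat) :
  prod_one_minus (prime_defect t) N <= exp (t ^ 4 * (1533/1000) - t ^ 2 * sum_f_R0 c2_term N).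
Proof.
  eapply Rle_trans;
    [apply prod_one_minus_le; [apply prime_defect_0 | intros n; apply prime_defect_bounds]|].
  apply exp_le_compat.
  assert (t ^ 2 * sum_f_R0 c2_term N - t ^ 4 * sum_f_R0 quartic_term N
          <= sum_f_R0 (fun n => prime_defect t n + prime_defect t n ^ 2 / 2) N).
  { rewrite !scal_sum, <- minus_sum. apply sum_Rle. intros n _.
    rewrite (Rmult_comm (c2_term n)), (Rmult_comm (quartic_term n)).
    apply prime_defect_quadratic_ge. }
  assert (t ^ 4 * sum_f_R0 quartic_term N <= t ^ 4 * (1533/1000)).
  { apply Rmult_le_compat_l; [|apply quartic_partial_le].
    replace (t ^ 4) with ((t ^ 2) ^ 2) by ring. apply pow2_ge_0. }
  lra.
Qed.

Lemma lim_prod_defect_le (t l : R) : is_lim_seq (prod_one_minus (prime_defect t)) l ->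
  l <= exp (t ^ 4 * (1533/1000) - t ^ 2 * c2).
Proof.
  intros Hl.
  assert (Hexp : is_lim_seq (fun N => exp (t ^ 4 * (1533/1000) - t ^ 2 * sum_f_R0 c2_term N))
                            (exp (t ^ 4 * (1533/1000) - t ^ 2 * c2))).
  { apply is_lim_seq_continuous; [apply derivable_continuous_pt, derivable_pt_exp|].
    apply is_lim_seq_minus'; [apply is_lim_seq_const|].
    apply is_lim_seq_mult'; [apply is_lim_seq_const | exact is_lim_c2]. }
  exact (is_lim_seq_le _ _ _ _ (prod_defect_le t) Hl Hexp).
Qed.

Theorem lemma4 :
  ex_series c2_term /\
  forall t : R, Rabs t <= 1/2 ->
    exists L : C,
      filterlim (fun N : nat => Hpartial t N) eventually (locally L) /\
      snd L = 0 /\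
      1 - c2 * t^2 <= fst L <= 1 - c2 * t^2 + 2.56 * t^4.
Proof.
  split; [exact ex_series_c2|].
  intros t Ht.
  destruct (ex_lim_prod_one_minus (prime_defect t) (fun n => proj1 (prime_defect_bounds t n)))
    as [l Hl].
  exists (RtoC l). split; [|split; [reflexivity|]].
  { apply filterlim_ext with (fun N => RtoC (prod_one_minus (prime_defect t) N));
      [intros N; symmetry; apply Hpartial_eq | apply filterlim_RtoC, Hl]. }
  simpl fst. split.
  { apply (is_lim_seq_le _ _ _ _ (prod_defect_ge t) (is_lim_seq_const _) Hl). }
  assert (Ht2 : 0 <= t ^ 2 <= 1/4).
  { rewrite <- pow2_abs. split; [apply pow2_ge_0|].
    replace (1/4) with ((1/2) ^ 2) by field. apply pow_incr. split; [apply Rabs_pos | exact Ht]. }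
  pose proof c2_le. pose proof c2_ge.
  (* t^2 * 1533/1000 <= (56/81)^2 <= c2, and 1533/1000 + (1404/1000)^2 / 2 <= 2.56 *)
  eapply Rle_trans; [apply (lim_prod_defect_le t l Hl)|].
  replace (t ^ 4) with ((t ^ 2) ^ 2) by ring.
  eapply Rle_trans; [apply exp_le_quadratic; split; nra|].
  assert (c2 ^ 2 <= (1404/1000) ^ 2) by (apply pow_incr; nra).
  nra.
Qed.
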